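(* Let $q$ be a prime power and $1\le s<t\le k$ integers. There exists a linear AOA$(s,t,k,q)$ if and only if there exists a linear MDS code $C$ of length $k$ and dimension $t$ over $\mathbb{F}_q$ which contains a linear MDS code $C'\subseteq C$ of length $k$ and dimension $s$ over $\mathbb{F}_q$.
   Context: An orthogonal array OA$(t,k,v)$ (with $1\le t\le k$) is a $v^t\times k$ array with entries from a set $X$ of size $v$ such that, for every choice of $t$ of its columns, each $t$-tuple in $X^t$ appears exactly once as a row of the corresponding $v^t\times t$ subarray. For integers $1\le s\le t\le k$, an augmented orthogonal array AOA$(s,t,k,v)$ is a $v^t\times(k+1)$ array $A$ such that: (1) the first $k$ columns of $A$ form an OA$(t,k,v)$ on a symbol set $X$ of size $v$; (2) the last column of $A$ has entries from a set $Y$ of size $v^{t-s}$; (3) for any choice of $s$ of the first $k$ columns, these $s$ columns together with the last column contain every $(s+1)$-tuple of $X^s\times Y$ exactly once as a row. For a prime power $q$, an OA$(t,k,q)$ over $\mathbb{F}_q$ is linear if its set of rows is a $t$-dimensional $\mathbb{F}_q$-subspace of $\mathbb{F}_q^k$; an AOA$(s,t,k,q)$ is linear if $X=\mathbb{F}_q$, $Y=\mathbb{F}_q^{t-s}$, and its set of rows, regarded as vectors in $\mathbb{F}_q^{k}\times\mathbb{F}_q^{t-s}=\mathbb{F}_q^{k+t-s}$, is an $\mathbb{F}_q$-linear subspace. A linear code of length $k$ and dimension $t$ over $\mathbb{F}_q$ is a $t$-dimensional subspace of $\mathbb{F}_q^k$; it is MDS (maximum distance separable) if its minimum Hamming distance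 is $k-t+1$ (equivalently, any $t$ columns of a $t\times k$ generator matrix are linearly independent). *)

From HB Require Import structures.
From mathcomp Require Import all_boot all_order all_algebra all_field.
Set Implicit Arguments. Unset Strict Implicit. Unset Printing Implicit Defensive.
Import GRing.Theory.
Local Open Scope ring_scope.

Definition hweight (F : fieldType) (n : nat) (x : 'rV[F]_n) : nat :=
  #|[set i : 'I_n | x 0 i != 0]|.

(* A linear code C (a subspace of F^k) is MDS: its minimum Hamming distance
   (= minimum weight of a nonzero codeword) equals k - dim C + 1. *)
Definition MDS (F : fieldType) (k : nat) (C : {vspace 'rV[F]_k}) : Prop :=
  (exists2 x, x \in C & x != 0 /\ hweight x = (k - \dim C + 1)%N) /\
  (forall x, x \in C -> x != 0 -> (k - \dim C + 1 <= hweight x)%N).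

(* The array whose rows are the elements of A (a subspace of
   F^k x F^(t-s) = F^(k+(t-s))) is an AOA(s,t,k,q), q = #|F|:
   (1) for every choice of t distinct columns among the first k (given by an
       injective c : 'I_t -> 'I_k), each t-tuple appears exactly once;
   (3) for every choice of s distinct columns among the first k, together with
       the last column (valued in Y = F^(t-s)), each (s+1)-tuple in
       F^s x F^(t-s) appears exactly once. *)
Definition is_linear_AOA (F : finFieldType) (s t k : nat)
    (A : {vspace 'rV[F]_(k + (t - s))}) : Prop :=
  (forall c : 'I_t -> 'I_k, injective c -> forall y : 'rV[F]_t,
     #|[set x : 'rV[F]_(k + (t - s)) | (x \in A) &&
         ((\row_j x 0 (lshift (t - s) (c j))) == y)]| = 1%N) /\
  (forall c : 'I_s -> 'I_k, injective c ->
     forall (y : 'rV[F]_s) (z : 'rV[F]_(t - s)),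
     #|[set x : 'rV[F]_(k + (t - s)) | [&& x \in A,
         (\row_j x 0 (lshift (t - s) (c j))) == y &
         rsubmx x == z]]| = 1%N).

Arguments is_linear_AOA {F} s t k A.

(* A row (u, v) of a linear AOA has u in F^k and v in F^(t-s).  A linear code
   of dimension d is MDS iff its projection onto any d coordinates is
   injective.  Condition (1) says exactly this for the code C of first blocks
   u, with d = t; condition (3) taken at v = 0 says it for the subcode C' of
   first blocks of the rows with v = 0, with d = s.  Conversely, given
   C' <= C, extend each u in C by the coordinates of its component in a
   complement of C' in C: the rows with vanishing extension are then exactly
   C', and (3) follows from the MDS property of C'. *)

From HB Require Import structures.
From mathcomp Require Import all_boot all_order all_algebra all_field.
From mathcomp Require Import zify.
Set Implicit Arguments. Unset Strict Implicit. Unset Printing Implicit Defensive.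
Import GRing.Theory.
Local Open Scope ring_scope.

Lemma fibers_card1P (T Y : finType) (V : {set T}) (g : T -> Y) :
  (forall y, #|[set x | (x \in V) && (g x == y)]| = 1%N) <->
  {in V &, injective g} /\ #|V| = #|Y|.
Proof.
split=> [fib1 | [ginj cardV] y].
- have fibP y : exists2 x, x \in V & forall z, (z \in V) && (g z == y) = (z == x).
    have /eqP/cards1P [x /setP fibE] := fib1 y.
    have := fibE x; rewrite !inE eqxx => /andP [Vx _].
    by exists x => // z; have := fibE z; rewrite !inE.
  have ginj : {in V &, injective g}.
    move=> x1 x2 Vx1 Vx2 gx12; have [x _ fibE] := fibP (g x1).
    have := fibE x1; have := fibE x2; rewrite Vx1 Vx2 gx12 eqxx /=.
    by move=> /esym/eqP -> /esym/eqP.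
  split=> //; rewrite -(card_in_imset ginj) -cardsT.
  suff -> : g @: V = [set: Y] by [].
  apply/setP => y; rewrite !inE; have [x Vx fibE] := fibP y.
  by have := fibE x; rewrite Vx eqxx => /eqP <-; apply: imset_f.
- have : y \in g @: V.
    suff -> : g @: V = setT by rewrite inE.
    by apply/eqP; rewrite eqEcard subsetT cardsT (card_in_imset ginj) cardV /=.
  case/imsetP => x Vx ->; apply/eqP/cards1P; exists x; apply/setP => z.
  rewrite !inE; apply/andP/eqP => [[Vz /eqP gzx] | ->]; last by rewrite Vx eqxx.
  exact: ginj.
Qed.

Lemma linear_fibers_card1P (F : finFieldType) n m (V : {vspace 'rV[F]_n})
    (g : 'rV[F]_n -> 'rV[F]_m) : {morph g : x y / x - y} ->
  (forall y, #|[set x | (x \in V) && (g x == y)]| = 1%N) <->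
  \dim V = m /\ (forall x, x \in V -> g x = 0 -> x = 0).
Proof.
move=> gB; have g0 : g 0 = 0 by rewrite -(subrr 0) gB subrr.
pose Vs := [set x | x \in V].
have fibE y : [set x | (x \in V) && (g x == y)] = [set x | (x \in Vs) && (g x == y)].
  by apply/setP => x; rewrite !inE.
have cardVs : #|Vs| = (#|F| ^ \dim V)%N by rewrite cardsE card_vspace.
have cardrV : #|{: 'rV[F]_m}| = (#|F| ^ m)%N by rewrite card_mx mul1n.
split=> [fib1 | [dimV ker0] y].
- have [ginj] : {in Vs &, injective g} /\ #|Vs| = #|{: 'rV[F]_m}|.
    by apply/fibers_card1P => y; rewrite -fibE.
  rewrite cardVs cardrV => /(expnI (finNzRing_gt1 F)) dimV.
  by split=> // x Vx gx0; apply: ginj; rewrite ?inE ?rpred0 ?g0.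
- rewrite fibE; apply: (fibers_card1P Vs g).2; split; last by rewrite cardVs cardrV dimV.
  move=> x1 x2 /[!inE] Vx1 Vx2 gx12; apply/eqP; rewrite -subr_eq0; apply/eqP.
  by apply: ker0; rewrite ?rpredB // gB gx12 subrr.
Qed.

Lemma colsub_rV_eq0 (R : nmodType) k m (c : 'I_m -> 'I_k) (x : 'rV[R]_k) :
  colsub c x = 0 <-> forall j, x 0 (c j) = 0.
Proof.
split=> [/rowP cx0 j | x0]; last by apply/rowP => j; rewrite !mxE x0.
by have := cx0 j; rewrite !mxE.
Qed.

Lemma widen_ord_inj m k (mk : (m <= k)%N) : injective (widen_ord mk).
Proof. by move=> i j /(congr1 val) /= /val_inj. Qed.

Lemma hweight_leP (F : fieldType) k m (x : 'rV[F]_k) : (m <= k)%N ->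
  (hweight x <= k - m)%N <-> exists2 c : 'I_m -> 'I_k, injective c & colsub c x = 0.
Proof.
move=> mk; set S := [set i | x 0 i != 0].
have cardSC : (#|S| + #|~: S| = k)%N by rewrite cardsC card_ord.
split=> [wx | [c ic /colsub_rV_eq0 cx0]].
- have mSC : (m <= #|~: S|)%N by rewrite /hweight -/S in wx; lia.
  exists (fun j => enum_val (widen_ord mSC j)).
    by move=> i j /enum_val_inj /widen_ord_inj.
  apply/colsub_rV_eq0 => j; have := enum_valP (widen_ord mSC j).
  by rewrite !inE negbK => /eqP.
- have : (c @: [set: 'I_m] \subset ~: S).
    by apply/subsetP => _ /imsetP [j _ ->]; rewrite !inE cx0 eqxx.
  move/subset_leq_card; rewrite card_imset // cardsT card_ord /hweight -/S; lia.
Qed.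

Definition proj_injective (F : fieldType) k d (C : {vspace 'rV[F]_k}) : Prop :=
  forall c : 'I_d -> 'I_k, injective c -> forall x, x \in C -> colsub c x = 0 -> x = 0.

Lemma dimv_rV_le (F : fieldType) k (C : {vspace 'rV[F]_k}) : (\dim C <= k)%N.
Proof. by have := dimvS (subvf C); rewrite dimvf dim_matrix GRing.mul1r. Qed.

Lemma proj_injective_hweight (F : fieldType) k d (C : {vspace 'rV[F]_k}) :
  (d <= k)%N ->
  proj_injective d C <->
  (forall x, x \in C -> x != 0 -> (k - d + 1 <= hweight x)%N).
Proof.
move=> dk; split=> [Cinj x Cx | wC c ic x Cx cx0].
- apply: contraNT; rewrite -ltnNge addn1 ltnS => /(hweight_leP _ dk) [c ic cx0].
  by rewrite (Cinj c ic x Cx cx0).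
- have /(hweight_leP _ dk) wx : exists2 c : 'I_d -> 'I_k, injective c & colsub c x = 0.
    by exists c.
  by apply/eqP; apply: contraLR wx => /(wC x Cx); rewrite addn1 ltnNge.
Qed.

Lemma proj_injective_min_weight (F : finFieldType) k d (C : {vspace 'rV[F]_k}) :
  \dim C = d.+1 -> proj_injective d.+1 C ->
  exists2 x, x \in C & x != 0 /\ hweight x = (k - d.+1 + 1)%N.
Proof.
move=> dimC Cinj; have dk : (d.+1 <= k)%N by rewrite -dimC dimv_rV_le.
pose c0 := widen_ord dk; pose e0 : 'rV[F]_d.+1 := delta_mx 0 ord0.
pose p0 : 'rV[F]_k -> 'rV[F]_d.+1 := colsub c0.
have p0B : {morph p0 : x y / x - y} by move=> x y; exact: raddfB.
have fib1 := (linear_fibers_card1P C p0B).2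
  (conj dimC (Cinj c0 (@widen_ord_inj _ _ dk))).
(* The codeword whose first d+1 coordinates are (1, 0, ..., 0). *)
have /eqP/cards1P [x /setP /(_ x)] := fib1 e0.
rewrite !inE eqxx => /andP [Cx /eqP cx].
have x_neq0 : x != 0.
  apply/eqP => x0; move: cx; rewrite x0 /p0 linear0 => /rowP /(_ ord0) /eqP.
  by rewrite !mxE eqxx eq_sym oner_eq0.
have x_zeros : colsub (c0 \o lift ord0) x = 0.
  rewrite colsub_comp [colsub c0 x]cx; apply/colsub_rV_eq0 => j.
  by rewrite mxE eq_sym (negPf (neq_lift _ _)) andbF.
have w_le : (hweight x <= k - d)%N.
  apply/(hweight_leP _ (ltnW dk)); exists (c0 \o lift ord0) => //.
  exact: inj_comp (@widen_ord_inj _ _ dk) (@lift_inj _ ord0).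
have w_ge := (proj_injective_hweight _ dk).1 Cinj x Cx x_neq0.
by exists x => //; split=> //; lia.
Qed.

Lemma MDS_proj_injective (F : finFieldType) k d (C : {vspace 'rV[F]_k}) :
  \dim C = d -> (0 < d)%N -> MDS C <-> proj_injective d C.
Proof.
case: d => // d dimC _; have dk : (d.+1 <= k)%N by rewrite -dimC dimv_rV_le.
rewrite /MDS dimC -(proj_injective_hweight _ dk).
by split=> [[] | Cinj] //; split=> //; exact: proj_injective_min_weight.
Qed.

Lemma limg_proj_injective (F : fieldType) n k d (U : {vspace 'rV[F]_n})
    (L : 'Hom('rV[F]_n, 'rV[F]_k)) : (d <= k)%N ->
  (forall c : 'I_d -> 'I_k, injective c ->
     forall x, x \in U -> colsub c (L x) = 0 -> x = 0) ->
  \dim (L @: U) = \dim U /\ proj_injective d (L @: U).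
Proof.
move=> dk Linj; split; last first.
  by move=> c ic _ /memv_imgP [x Ux ->] /(Linj c ic x Ux) ->; rewrite linear0.
apply: limg_dim_eq; apply/eqP; rewrite -subv0; apply/subvP => x.
rewrite memv_cap memv_ker memv0 => /andP [Ux /eqP Lx0].
by apply/eqP; apply: (Linj _ (@widen_ord_inj _ _ dk)) => //; rewrite Lx0 linear0.
Qed.

Lemma row_lshift_colsub (R : Type) k n m (x : 'M[R]_(1, k + n)) (c : 'I_m -> 'I_k) :
  \row_j x 0 (lshift n (c j)) = colsub c (lsubmx x).
Proof. by apply/rowP => j; rewrite !mxE. Qed.

Lemma row_lshiftB (R : zmodType) k n m (c : 'I_m -> 'I_k) :
  {morph (fun x : 'M[R]_(1, k + n) => \row_j x 0 (lshift n (c j))) : x y / x - y}.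
Proof. by move=> x y; rewrite /= !row_lshift_colsub !raddfB. Qed.

Lemma MDS_pair_of_linear_AOA (F : finFieldType) s t k
    (A : {vspace 'rV[F]_(k + (t - s))}) :
  (0 < s)%N -> (s < t)%N -> (t <= k)%N -> is_linear_AOA s t k A ->
  exists C C' : {vspace 'rV[F]_k},
    [/\ \dim C = t, MDS C, \dim C' = s, MDS C' & (C' <= C)%VS].
Proof.
move=> s_gt0 st tk [tuples_once stuples_once]; have sk := leq_trans (ltnW st) tk.
pose L := linfun (@lsubmx F 1 k (t - s)); pose R := linfun (@rsubmx F 1 k (t - s)).
pose A' := (A :&: lker R)%VS.
have injA (c : 'I_t -> 'I_k) : injective c -> \dim A = t /\
    forall x, x \in A -> colsub c (L x) = 0 -> x = 0.
  move=> ic; have [dimA kerA] :=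
    (linear_fibers_card1P A (row_lshiftB c)).1 (tuples_once c ic).
  by split=> // x Ax; rewrite lfunE -row_lshift_colsub; exact: kerA.
have injA' (c : 'I_s -> 'I_k) : injective c -> \dim A' = s /\
    forall x, x \in A' -> colsub c (L x) = 0 -> x = 0.
  move=> ic; have [|dimA' kerA'] := (linear_fibers_card1P A' (row_lshiftB c)).1.
    move=> y; apply: etrans (stuples_once c ic y 0); apply: eq_card => x.
    by rewrite !inE memv_cap memv_ker lfunE /= -andbA [(rsubmx x == 0) && _]andbC.
  by split=> // x A'x; rewrite lfunE -row_lshift_colsub; exact: kerA'.
have [dimLA LAinj] := limg_proj_injective tk (fun c ic => (injA c ic).2).
have [dimLA' LA'inj] := limg_proj_injective sk (fun c ic => (injA' c ic).2).
have dimC : \dim (L @: A) = t.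
  by rewrite dimLA; exact: (injA _ (@widen_ord_inj _ _ tk)).1.
have dimC' : \dim (L @: A') = s.
  by rewrite dimLA'; exact: (injA' _ (@widen_ord_inj _ _ sk)).1.
exists (L @: A)%VS, (L @: A')%VS; split=> //.
- exact/(MDS_proj_injective dimC (leq_ltn_trans (leq0n s) st)).
- exact/(MDS_proj_injective dimC' s_gt0).
- exact/limgS/capvSl.
Qed.

Lemma coord_row_eq0 (F : fieldType) (vT : vectType F) m (X : m.-tuple vT) (v : vT) :
  v \in <<X>>%VS -> \row_j coord X j v = 0 -> v = 0.
Proof.
move=> Xv /rowP coord0; rewrite (coord_span Xv) big1 // => j _.
by have := coord0 j; rewrite !mxE => ->; rewrite scale0r.
Qed.

Lemma addv_pi1_eq0 (F : fieldType) (vT : vectType F) (U V : {vspace vT}) w :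
  w \in (U + V)%VS -> addv_pi1 U V w = 0 -> w \in V.
Proof. by move=> /addv_pi1_pi2 wE pi1w0; rewrite -wE pi1w0 add0r memv_pi2. Qed.

Definition coord_ext (F : fieldType) n m (P : 'End('rV[F]_n))
    (X : m.-tuple 'rV[F]_n) (u : 'rV[F]_n) : 'rV[F]_(n + m) :=
  row_mx u (\row_j coord X j (P u)).

Lemma coord_ext_is_linear (F : fieldType) n m (P : 'End('rV[F]_n))
    (X : m.-tuple 'rV[F]_n) :
  linear (coord_ext P X).
Proof.
move=> a u v; rewrite /coord_ext linearP /= scale_row_mx add_row_mx; congr row_mx.
by apply/rowP => j; rewrite !mxE linearP.
Qed.

HB.instance Definition _ (F : fieldType) n m (P : 'End('rV[F]_n))
    (X : m.-tuple 'rV[F]_n) :=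
  GRing.isLinear.Build F 'rV[F]_n 'rV[F]_(n + m) _ (coord_ext P X)
    (coord_ext_is_linear P X).

Lemma linear_AOA_of_MDS_pair (F : finFieldType) s t k (C C' : {vspace 'rV[F]_k}) :
  (0 < s)%N -> (s < t)%N -> \dim C = t -> MDS C -> \dim C' = s -> MDS C' ->
  (C' <= C)%VS -> exists A : {vspace 'rV[F]_(k + (t - s))}, is_linear_AOA s t k A.
Proof.
move=> s_gt0 st dimC MDS_C dimC' MDS_C' C'C.
have Cinj := (MDS_proj_injective dimC (leq_ltn_trans (leq0n s) st)).1 MDS_C.
have C'inj := (MDS_proj_injective dimC' s_gt0).1 MDS_C'.
have dimD : (t - s)%N = \dim (C :\: C').
  by rewrite -dimC -(dimv_cap_compl C C') (capv_idPr C'C) dimC' addKn.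
pose X := tcast (esym dimD) (vbasis (C :\: C')).
have spanX : (<<X>> = C :\: C')%VS.
  by have /andP [/eqP <- _] := vbasisP (C :\: C')%VS; rewrite val_tcast.
pose G := linfun (coord_ext (addv_pi1 C C') X).
have GE u : G u = row_mx u (\row_j coord X j (addv_pi1 C C' u)) by rewrite lfunE.
have dimGC : \dim (G @: C) = t.
  rewrite limg_dim_eq //; apply/eqP; rewrite -subv0; apply/subvP => u.
  rewrite memv_cap memv_ker memv0 GE => /andP [_ /eqP/(congr1 lsubmx)].
  by rewrite row_mxKl linear0 => ->.
exists (G @: C)%VS; split=> [c ic y | c ic y z].
- apply: (linear_fibers_card1P _ (row_lshiftB c)).2.
  split=> // _ /memv_imgP [u Cu ->]; rewrite row_lshift_colsub {1}GE row_mxKl.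
  by move=> /(Cinj c ic u Cu) ->; rewrite linear0.
- pose g (x : 'rV[F]_(k + (t - s))) := row_mx (colsub c (lsubmx x)) (rsubmx x).
  have gB : {morph g : x y / x - y}.
    by move=> x1 x2; rewrite /g !raddfB opp_row_mx add_row_mx.
  apply: etrans (_ : #|[set x | (x \in (G @: C)%VS) && (g x == row_mx y z)]| = 1%N).
    apply: eq_card => x; rewrite !inE row_lshift_colsub.
    congr (_ && _); rewrite /g.
    by apply/andP/eqP => [[/eqP -> /eqP ->] | /eq_row_mx [-> ->]].
  apply: (linear_fibers_card1P _ gB).2; split; first by rewrite dimGC subnKC // ltnW.
  move=> _ /memv_imgP [u Cu ->] /eqP.
  rewrite /g {1 2}GE row_mxKl row_mxKr row_mx_eq0 => /andP [/eqP cu0 /eqP coord0].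
  have uC' : u \in C'.
    apply: (@addv_pi1_eq0 _ _ C); first by rewrite (addv_idPl C'C).
    by apply: coord_row_eq0 coord0; rewrite spanX memv_pi.
  by rewrite (C'inj c ic u uC' cu0) linear0.
Qed.

Unset Implicit Arguments.

Theorem theorem3p3 (F : finFieldType) (s t k : nat) :
  (1 <= s)%N -> (s < t)%N -> (t <= k)%N ->
  (exists A : {vspace 'rV[F]_(k + (t - s))}, is_linear_AOA s t k A) <->
  (exists C C' : {vspace 'rV[F]_k},
     [/\ \dim C = t, MDS C, \dim C' = s, MDS C' & (C' <= C)%VS]).
Proof.
move=> s_gt0 st tk; split=> [[A AOA_A] | [C [C' [dimC MDS_C dimC' MDS_C' C'C]]]].
- exact: MDS_pair_of_linear_AOA s_gt0 st tk AOA_A.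
- exact: linear_AOA_of_MDS_pair s_gt0 st dimC MDS_C dimC' MDS_C' C'C.
Qed.
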